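(* Let $T$ be a split Leibniz triple system with symmetric root system $\Lambda^1$, and suppose $\Lambda^0$ is symmetric. Let $U$ be a vector space complement in $T_0$ of $\mathrm{span}_{\mathbb{K}}\{\{T_\alpha,T_\beta,T_\gamma\}:\alpha+\beta+\gamma=0,\ \alpha,\beta,\gamma\in\Lambda^1\cup\{0\}\}$. Then $$T=U+\sum_{[\alpha]\in\Lambda^1/\sim}I_{[\alpha]},$$ where $I_{[\alpha]}=T_{\Lambda^1_\alpha}=T_{0,\Lambda^1_\alpha}\oplus V_{\Lambda^1_\alpha}$ is an ideal of $T$ for each class $[\alpha]$; moreover, $\{I_{[\alpha]},T,I_{[\beta]}\}=\{I_{[\alpha]},I_{[\beta]},T\}=\{T,I_{[\alpha]},I_{[\beta]}\}=0$ whenever $[\alpha]\neq[\beta]$.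
   Context: A Leibniz triple system is a vector space $T$ over a field $\mathbb{K}$ with a trilinear product $\{\cdot,\cdot,\cdot\}$ satisfying, for all $a,b,c,d,e\in T$: $\{a,\{b,c,d\},e\}=\{\{a,b,c\},d,e\}-\{\{a,c,b\},d,e\}-\{\{a,d,b\},c,e\}+\{\{a,d,c\},b,e\}$ and $\{a,b,\{c,d,e\}\}=\{\{a,b,c\},d,e\}-\{\{a,b,d\},c,e\}-\{\{a,b,e\},c,d\}+\{\{a,b,e\},d,c\}$. An ideal of $T$ is a subspace $I$ with $\{I,T,T\}+\{T,I,T\}+\{T,T,I\}\subseteq I$. Its standard embedding is the right Leibniz algebra $L=L^0\oplus L^1$ ($L^0$ the span of symbols $x\otimes y$, $L^1=T$) with product $[(x\otimes y,z),(u\otimes v,w)]=(\{x,y,u\}\otimes v-\{x,y,v\}\otimes u+z\otimes w,\ \{x,y,w\}+\{z,u,v\}-\{z,v,u\})$; so $[x,y]=x\otimes y$ and $\{x,y,z\}=[[x,y],z]$ for $x,y,z\in T$. Let $H^0$ be a maximal abelian subalgebra of $L^0$; for $\alpha\in(H^0)^*$ put $T_\alpha=\{t\in T:[t,h]=\alpha(h)t\ \forall h\in H^0\}$, $L^0_\alpha=\{v\in L^0:[v,h]=\alpha(h)v\ \forall h\in H^0\}$, $\Lambda^1=\{\alpha\neq0:T_\alpha\neq0\}$, $\Lambda^0=\{\alpha\neq0:L^0_\alpha\neq0\}$. $T$ is split (w.r.t. $H^0$) if $T=T_0\oplus\bigoplus_{\alpha\in\Lambda^1}T_\alpha$, $\{T_0,T_0,T_0\}=0$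 and $\{T_\alpha,T_{-\alpha},T_0\}=0$ for all $\alpha\in\Lambda^1$. A set $\Lambda\subset(H^0)^*$ is symmetric if $\alpha\in\Lambda$ implies $-\alpha\in\Lambda$. Two roots $\alpha,\beta\in\Lambda^1$ are connected if there is a family $\alpha_1,\dots,\alpha_{2n+1}\in\Lambda^1\cup\{0\}$ with: $\alpha_1+\dots+\alpha_{2k+1}\in\Lambda^1$ for $k=0,\dots,n$; $\alpha_1+\dots+\alpha_{2k}\in\Lambda^0$ for $k=1,\dots,n$; $\alpha_1=\alpha$ and $\alpha_1+\dots+\alpha_{2n+1}\in\{\beta,-\beta\}$. $\Lambda^1_\alpha$ is the set of $\beta\in\Lambda^1$ connected with $\alpha$; $\alpha\sim\beta$ iff $\beta\in\Lambda^1_\alpha$ (an equivalence relation on $\Lambda^1$ when $\Lambda^0$ is symmetric), and $[\alpha]$ is the class of $\alpha$. For $\alpha\in\Lambda^1$: $T_{0,\Lambda^1_\alpha}=\mathrm{span}_{\mathbb{K}}\{\{T_{\beta_1},T_{\beta_2},T_{\beta_3}\}:\beta_1+\beta_2+\beta_3=0,\ \beta_i\in\Lambda^1_\alpha\cup\{0\}\}$ and $V_{\Lambda^1_\alpha}=\bigoplus_{\gamma\in\Lambda^1_\alpha}T_\gamma$. *)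

From HB Require Import structures.
From mathcomp Require Import all_boot all_order all_algebra.
Set Implicit Arguments. Unset Strict Implicit. Unset Printing Implicit Defensive.
Import GRing.Theory.
Local Open Scope ring_scope.

(* list membership in Prop (no eqType needed) *)
Fixpoint Lin (A : Type) (x : A) (s : seq A) : Prop :=
  match s with [::] => False | y :: s' => y = x \/ Lin x s' end.

Section LinAlg.
Variable K : fieldType.

Definition subspace (V : lmodType K) (P : V -> Prop) : Prop :=
  [/\ P 0, (forall x y, P x -> P y -> P (x + y)) & (forall (a : K) x, P x -> P (a *: x))].

Definition kspan (V : lmodType K) (P : V -> Prop) (v : V) : Prop :=
  exists s : seq (K * V), (forall p, Lin p s -> P p.2) /\ v = \sum_(p <- s) p.1 *: p.2.

Definition lin_map (V W : lmodType K) (g : V -> W) : Prop :=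
  forall (a : K) x y, g (a *: x + y) = a *: g x + g y.

Definition bilin_map (U V W : lmodType K) (f : U -> V -> W) : Prop :=
  (forall (a : K) x x' y, f (a *: x + x') y = a *: f x y + f x' y) /\
  (forall (a : K) x y y', f x (a *: y + y') = a *: f x y + f x y').
End LinAlg.

Section LTS.
Variable K : fieldType.
Variable T : lmodType K.
Variable trip : T -> T -> T -> T.

Definition trilinear : Prop :=
  [/\ (forall (a : K) x x' y z, trip (a *: x + x') y z = a *: trip x y z + trip x' y z),
      (forall (a : K) x y y' z, trip x (a *: y + y') z = a *: trip x y z + trip x y' z) &
      (forall (a : K) x y z z', trip x y (a *: z + z') = a *: trip x y z + trip x y z')].

Definition leibniz_triple : Prop :=
  [/\ trilinear,
      (forall a b c d e, trip a (trip b c d) e =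
          trip (trip a b c) d e - trip (trip a c b) d e
        - trip (trip a d b) c e + trip (trip a d c) b e) &
      (forall a b c d e, trip a b (trip c d e) =
          trip (trip a b c) d e - trip (trip a b d) c e
        - trip (trip a b e) c d + trip (trip a b e) d c)].

Definition ideal (I : T -> Prop) : Prop :=
  subspace I /\ forall x y z, I x -> [/\ I (trip x y z), I (trip y x z) & I (trip y z x)].

(* The defining relations of L^0 = (T (x) T) / span{ a(x){b,c,d} - ({a,b,c}(x)d
   - {a,c,b}(x)d - {a,d,b}(x)c + {a,d,c}(x)b) } *)
Definition tens_rel (W : lmodType K) (f : T -> T -> W) : Prop :=
  forall a b c d, f a (trip b c d) =
    f (trip a b c) d - f (trip a c b) d - f (trip a d b) c + f (trip a d c) b.

(* (L0, tens) is L^0 (characterised by its universal property), br0 is the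
   product of L^0 with itself, and act t v = [t, v] for t in L^1 = T, v in L^0. *)
Definition standard_embedding (L0 : lmodType K) (tens : T -> T -> L0)
    (br0 : L0 -> L0 -> L0) (act : T -> L0 -> T) : Prop :=
  [/\ bilin_map tens /\ tens_rel tens,
      (forall v : L0, kspan (fun w => exists x y, w = tens x y) v),
      (forall (W : lmodType K) (f : T -> T -> W), bilin_map f -> tens_rel f ->
         exists g : L0 -> W, lin_map g /\ forall x y, g (tens x y) = f x y),
      bilin_map br0 /\ (forall x y u v,
         br0 (tens x y) (tens u v) = tens (trip x y u) v - tens (trip x y v) u) &
      bilin_map act /\ (forall t x y, act t (tens x y) = trip t x y - trip t y x)].

Section Roots.
Variables (L0 : lmodType K) (br0 : L0 -> L0 -> L0) (act : T -> L0 -> T).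

Definition abelian_subalg (H : L0 -> Prop) : Prop :=
  [/\ subspace H, (forall h h', H h -> H h' -> H (br0 h h'))
    & (forall h h', H h -> H h' -> br0 h h' = 0)].

Definition max_abelian (H : L0 -> Prop) : Prop :=
  abelian_subalg H /\
  forall H' : L0 -> Prop, abelian_subalg H' -> (forall h, H h -> H' h) ->
    forall h, H' h -> H h.

Variable H0 : L0 -> Prop.

(* elements of (H^0)^* are represented as functions H^0 -> K *)
Definition wt := {h : L0 | H0 h} -> K.
Definition w0 : wt := fun _ => 0.
Definition wadd (a b : wt) : wt := fun h => a h + b h.
Definition wopp (a : wt) : wt := fun h => - a h.

Definition Tsp (a : wt) (t : T) : Prop := forall h : {h : L0 | H0 h}, act t (sval h) = a h *: t.
Definition Lsp (a : wt) (v : L0) : Prop := forall h : {h : L0 | H0 h}, br0 v (sval h) = a h *: v.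

Definition Lam1 (a : wt) : Prop := a <> w0 /\ exists t, t <> 0 /\ Tsp a t.
Definition Lam0 (a : wt) : Prop := a <> w0 /\ exists v, v <> 0 /\ Lsp a v.
Definition Lam1z (a : wt) : Prop := Lam1 a \/ a = w0.

Definition symmetric_set (P : wt -> Prop) : Prop := forall a, P a -> P (wopp a).

Definition split_LTS : Prop :=
  [/\ (forall t, exists s : seq (wt * T),
          (forall p, Lin p s -> Lam1z p.1 /\ Tsp p.1 p.2) /\ t = \sum_(p <- s) p.2),
      (forall s : seq (wt * T),
          (forall p, Lin p s -> Lam1z p.1 /\ Tsp p.1 p.2) ->
          (forall i j, (i < size s)%N -> (j < size s)%N -> i <> j ->
              (nth (w0, 0) s i).1 <> (nth (w0, 0) s j).1) ->
          \sum_(p <- s) p.2 = 0 -> forall p, Lin p s -> p.2 = 0),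
      (forall x y z, Tsp w0 x -> Tsp w0 y -> Tsp w0 z -> trip x y z = 0) &
      (forall a, Lam1 a -> forall x y z, Tsp a x -> Tsp (wopp a) y -> Tsp w0 z ->
          trip x y z = 0)].

Fixpoint psum (a : nat -> wt) (k : nat) : wt :=
  match k with 0 => w0 | k'.+1 => wadd (psum a k') (a k'.+1) end.

Definition connected (al be : wt) : Prop :=
  [/\ Lam1 al, Lam1 be &
   exists (n : nat) (a : nat -> wt),
    [/\ a 1%N = al,
        (forall i, (1 <= i <= n.*2.+1)%N -> Lam1z (a i)),
        (forall k, (k <= n)%N -> Lam1 (psum a k.*2.+1)),
        (forall k, (1 <= k <= n)%N -> Lam0 (psum a k.*2)) &
        (psum a n.*2.+1 = be \/ psum a n.*2.+1 = wopp be)]].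

Definition Lam1_of (al : wt) (be : wt) : Prop := Lam1 be /\ connected al be.

Definition zero_span (P : wt -> Prop) : T -> Prop :=
  kspan (fun t => exists (b1 b2 b3 : wt) (x y z : T),
    [/\ (P b1 \/ b1 = w0) /\ (P b2 \/ b2 = w0) /\ (P b3 \/ b3 = w0),
        wadd (wadd b1 b2) b3 = w0,
        Tsp b1 x /\ Tsp b2 y /\ Tsp b3 z &
        t = trip x y z]).

Definition T0_Lam (al : wt) : T -> Prop := zero_span (Lam1_of al).
Definition V_Lam (al : wt) : T -> Prop := kspan (fun t => exists g, Lam1_of al g /\ Tsp g t).

Definition I_cls (al : wt) (t : T) : Prop :=
  exists t0 v, [/\ T0_Lam al t0, V_Lam al v & t = t0 + v].

End Roots.
End LTS.

Arguments w0 {K L0} H0 _.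
Arguments wadd {K L0 H0} a b _.
Arguments wopp {K L0 H0} a _.
Arguments symmetric_set {K L0} H0 P.
Arguments Tsp {K T L0} act H0 a t.
Arguments Lsp {K L0} br0 H0 a v.
Arguments Lam1 {K T L0} act H0 a.
Arguments Lam0 {K L0} br0 H0 a.
Arguments Lam1z {K T L0} act H0 a.
Arguments psum {K L0 H0} a k _.
Arguments connected {K T L0} br0 act H0 al be.
Arguments Lam1_of {K T L0} br0 act H0 al be.
Arguments zero_span {K T} trip {L0} act H0 P t.
Arguments T0_Lam {K T} trip {L0} br0 act H0 al t.
Arguments V_Lam {K T L0} br0 act H0 al t.
Arguments I_cls {K T} trip {L0} br0 act H0 al t.
Arguments split_LTS {K T} trip {L0} act H0.
Arguments max_abelian {K L0} br0 H.
Arguments abelian_subalg {K L0} br0 H.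
Arguments standard_embedding {K T} trip {L0} tens br0 act.

(* Everything rests on one fact: the nonzero weights occurring in a nonzero
   product {x, y, z} of weight vectors of weights a, b, c lie in a single root
   class (together with 0).  Indeed {T_a, T_b, T_c} lies in T_(a+b+c) and
   x (x) y in L^0_(a+b), and a nonzero product forces enough of the tensors
   x (x) y, x (x) z, y (x) z to be nonzero to link a, b, c and a + b + c by
   connecting families.  Expanding a product with a generator {T_b1, T_b2, T_b3}
   of T_(0,[al]) by the Leibniz identities reduces it to such products, so the
   whole of I_[al] only meets weights of [al] u {0} in nonzero products: hence
   I_[al] is an ideal, and a nonzero product of elements of I_[al] and I_[be]
   with [al] <> [be] would lie in {T_0, T_0, T_0} = 0.  T_(0,[al]) meets V_[al]
   trivially because the root decomposition is direct, and T = U + sum I_[al]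
   because T_0 = U + T_(0,Lam1) and every root vector lies in its I_[al]. *)

From Pilot Require Import Defs.
From HB Require Import structures.
From mathcomp Require Import all_boot all_order all_algebra.
From mathcomp Require Import boolp functions zify ssrAC.
Set Implicit Arguments. Unset Strict Implicit. Unset Printing Implicit Defensive.
Import GRing.Theory.
Local Open Scope ring_scope.

(** * Linear algebra *)

Section LinearMaps.
Variables (K : fieldType) (V W : lmodType K) (f : V -> W).
Hypothesis lin_f : lin_map f.

Lemma lin_mapD x y : f (x + y) = f x + f y.
Proof. by have := lin_f 1 x y; rewrite !scale1r. Qed.

Lemma lin_map0 : f 0 = 0.
Proof. by apply/(addrI (f 0)); rewrite -lin_mapD !addr0. Qed.

Lemma lin_mapZ a x : f (a *: x) = a *: f x.
Proof. by have := lin_f a x 0; rewrite !addr0 lin_map0 addr0. Qed.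

Lemma lin_mapB x y : f (x - y) = f x - f y.
Proof. by rewrite lin_mapD -scaleN1r lin_mapZ scaleN1r. Qed.

End LinearMaps.

Lemma Lin_cat (A : Type) (x : A) s1 s2 : Lin x (s1 ++ s2) -> Lin x s1 \/ Lin x s2.
Proof. by elim: s1 => [|y s1 IH] /=; [right | case=> [|/IH]; tauto]. Qed.

Lemma Lin_map (A B : Type) (f : A -> B) (y : B) s :
  Lin y (map f s) -> exists2 x, Lin x s & y = f x.
Proof.
elim: s => [|x s IH] //= [<-|/IH [x' sx' ->]]; first by exists x; [left|].
by exists x'; [right|].
Qed.

Section Spans.
Variables (K : fieldType) (V : lmodType K).

Lemma subspace_sum (Q : V -> Prop) (I : Type) (s : seq I) (F : I -> V) :
  subspace Q -> (forall i, Lin i s -> Q (F i)) -> Q (\sum_(i <- s) F i).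
Proof.
move=> [Q0 QD _]; elim: s => [|i s IH] QF; first by rewrite big_nil.
by rewrite big_cons; apply: QD; [apply: QF; left | apply: IH => j sj; apply: QF; right].
Qed.

Lemma subspace_preimage (W : lmodType K) (f : V -> W) (Q : W -> Prop) :
  lin_map f -> subspace Q -> subspace (fun x => Q (f x)).
Proof.
move=> lin_f [Q0 QD QZ]; split => [|x y Qx Qy|a x Qx].
- by rewrite (lin_map0 lin_f).
- by rewrite (lin_mapD lin_f); apply: QD.
- by rewrite (lin_mapZ lin_f); apply: QZ.
Qed.

Lemma subspace0 : subspace (fun x : V => x = 0).
Proof. by split=> [|x y -> ->|a x ->]; rewrite ?addr0 ?scaler0. Qed.

Lemma subspace_add (P Q : V -> Prop) : subspace P -> subspace Q ->
  subspace (fun t => exists p q, [/\ P p, Q q & t = p + q]).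
Proof.
move=> [P0 PD PZ] [Q0 QD QZ].
split=> [|x y [p [q [Pp Qq ->]]] [p' [q' [Pp' Qq' ->]]]|c x [p [q [Pp Qq ->]]]].
- by exists 0, 0; rewrite addr0.
- by exists (p + p'), (q + q'); rewrite addrACA; split; [apply: PD | apply: QD |].
- by exists (c *: p), (c *: q); rewrite scalerDr; split; [apply: PZ | apply: QZ |].
Qed.

Variable P : V -> Prop.

Lemma kspan0 : kspan P 0.
Proof. by exists [::]; rewrite big_nil. Qed.

Lemma kspanD x y : kspan P x -> kspan P y -> kspan P (x + y).
Proof.
move=> [s1 [P1 ->]] [s2 [P2 ->]]; exists (s1 ++ s2); split; last by rewrite big_cat.
by move=> p /(@Lin_cat _ _ s1 s2) [/P1|/P2].
Qed.

Lemma kspanZ a x : kspan P x -> kspan P (a *: x).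
Proof.
move=> [s [Ps ->]]; exists [seq (a * p.1, p.2) | p <- s]; split.
  by move=> q /(@Lin_map _ _ _ q s) [p /Ps Pp ->].
by rewrite big_map scaler_sumr; apply: eq_bigr => p _; rewrite scalerA.
Qed.

Lemma kspan_gen x : P x -> kspan P x.
Proof. by move=> Px; exists [:: (1, x)]; rewrite big_seq1 scale1r; split=> // p [<-|]. Qed.

Lemma subspace_kspan : subspace (kspan P).
Proof. split; [exact: kspan0 | exact: kspanD | exact: kspanZ]. Qed.

Lemma kspan_min (Q : V -> Prop) : subspace Q -> (forall x, P x -> Q x) ->
  forall v, kspan P v -> Q v.
Proof.
move=> Qsub PQ v [s [Ps ->]]; apply: subspace_sum => // p sp.
by case: Qsub => _ _ QZ; apply/QZ/PQ/Ps.
Qed.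

End Spans.

Lemma LinP (A : eqType) (x : A) s : Lin x s <-> x \in s.
Proof.
elim: s => [|y s IH] /=; first by split.
rewrite in_cons; split=> [[->|/IH ->]|/orP [/eqP ->|/IH]]; rewrite ?eqxx ?orbT //;
  by [left | right].
Qed.

Lemma sum4_neq0 (V : zmodType) (S A B C D : V) :
  S = A - B - C + D -> S <> 0 -> A <> 0 \/ B <> 0 \/ C <> 0 \/ D <> 0.
Proof.
move=> eS S0; have [A0|] := lem (A = 0); last by left.
have [B0|] := lem (B = 0); last by right; left.
have [C0|] := lem (C = 0); last by right; right; left.
have [D0|] := lem (D = 0); last by right; right; right.
by case: S0; rewrite eS A0 B0 C0 D0 !subr0 addr0.
Qed.

Lemma summand4_neq0 (V : zmodType) (S A B C D : V) :
  A = S - B - C + D -> S <> 0 -> A <> 0 \/ B <> 0 \/ C <> 0 \/ D <> 0.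
Proof.
move=> eA S0; have [A0|] := lem (A = 0); last by left.
have [B0|] := lem (B = 0); last by right; left.
have [C0|] := lem (C = 0); last by right; right; left.
have [D0|] := lem (D = 0); last by right; right; right.
by case: S0; move: eA; rewrite A0 B0 C0 D0 !subr0 addr0.
Qed.

Section TrilinearMaps.
Variables (K : fieldType) (T : lmodType K) (f : T -> T -> T -> T).
Hypothesis trilin_f : trilinear f.

Lemma trilinear_lin1 y z : lin_map (fun x => f x y z).
Proof. by case: trilin_f => fl _ _ a x x'; apply: fl. Qed.

Lemma trilinear_lin2 x z : lin_map (fun y => f x y z).
Proof. by case: trilin_f => _ fm _ a y y'; apply: fm. Qed.

Lemma trilinear_lin3 x y : lin_map (f x y).
Proof. by case: trilin_f => _ _ fr a z z'; apply: fr. Qed.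

Lemma trilinear_swap12 : trilinear (fun x y z => f y x z).
Proof. by case: trilin_f. Qed.

Lemma trilinear_rot : trilinear (fun x y z => f y z x).
Proof. by case: trilin_f. Qed.

Lemma trilinear_swap23 : trilinear (fun x y z => f x z y).
Proof. by case: trilin_f. Qed.

Lemma trilinear0 x y : [/\ f 0 x y = 0, f x 0 y = 0 & f x y 0 = 0].
Proof.
by rewrite (lin_map0 (trilinear_lin1 _ _)) (lin_map0 (trilinear_lin2 _ _))
  (lin_map0 (trilinear_lin3 _ _)).
Qed.

Definition spanned_by (R S : T -> Prop) : Prop :=
  forall Q, subspace Q -> (forall x, S x -> Q x) -> forall x, R x -> Q x.

Lemma trilinear_spanned (R1 S1 R2 S2 R3 S3 Q : T -> Prop) :
  spanned_by R1 S1 -> spanned_by R2 S2 -> spanned_by R3 S3 -> subspace Q ->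
  (forall x y z, S1 x -> S2 y -> S3 z -> Q (f x y z)) ->
  forall x y z, R1 x -> R2 y -> R3 z -> Q (f x y z).
Proof.
move=> span1 span2 span3 Qsub fQ x y z R1x R2y R3z.
apply: (span1 (fun x => Q (f x y z))) R1x => [|x' S1x'].
  exact: subspace_preimage (trilinear_lin1 _ _) Qsub.
apply: (span2 (fun y => Q (f x' y z))) R2y => [|y' S2y'].
  exact: subspace_preimage (trilinear_lin2 _ _) Qsub.
apply: (span3 (fun z => Q (f x' y' z))) R3z => [|z' S3z'].
  exact: subspace_preimage (trilinear_lin3 _ _) Qsub.
exact: fQ.
Qed.

End TrilinearMaps.

(** * The standard embedding *)

Lemma subr_rearrange1 (V : zmodType) (A B C D E F : V) :
  A - E = (F - D) + ((A - B - C + D) - (E - C - B + F)).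
Proof.
rewrite !opprD !opprK !addrA.
rewrite [RHS](ACl ((3*7)*((1*10)*((6*2)*((8*5)*(9*4)))))%AC) /=.
by rewrite !subrr !addr0.
Qed.

Lemma subr_rearrange2 (V : zmodType) (P1 P2 Q1 R1 S1 S2 : V) :
  P1 - P2 = ((P1 - Q1 - R1 + S1) - (P2 - R1 - Q1 + S2)) + (S2 - S1).
Proof.
rewrite !opprD !opprK !addrA.
rewrite [RHS](ACl ((1*5)*((7*2)*((6*3)*((9*8)*(4*10)))))%AC) /=.
by rewrite !subrr !addr0.
Qed.

Section SplitLTS.
Variables (K : fieldType) (T : lmodType K) (trip : T -> T -> T -> T)
  (L0 : lmodType K) (tens : T -> T -> L0) (br0 : L0 -> L0 -> L0)
  (act : T -> L0 -> T) (H0 : L0 -> Prop).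
Hypothesis LTS : leibniz_triple trip.
Hypothesis embedding : standard_embedding trip tens br0 act.

Let trilin_trip : trilinear trip. Proof. by case: LTS. Qed.

Lemma trip0l y z : trip 0 y z = 0. Proof. by case: (trilinear0 trilin_trip y z). Qed.
Lemma trip0m x z : trip x 0 z = 0. Proof. by case: (trilinear0 trilin_trip x z). Qed.
Lemma trip0r x y : trip x y 0 = 0. Proof. by case: (trilinear0 trilin_trip x y). Qed.

Lemma leibniz_mid a b c d e : trip a (trip b c d) e =
  trip (trip a b c) d e - trip (trip a c b) d e
  - trip (trip a d b) c e + trip (trip a d c) b e.
Proof. by case: LTS. Qed.

Lemma leibniz_right a b c d e : trip a b (trip c d e) =
  trip (trip a b c) d e - trip (trip a b d) c e
  - trip (trip a b e) c d + trip (trip a b e) d c.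
Proof. by case: LTS. Qed.

Lemma lin_tensl y : lin_map (tens^~ y).
Proof. by case: embedding => [[[tl _] _] _ _ _ _] a x x'; apply: tl. Qed.

Lemma lin_tensr x : lin_map (tens x).
Proof. by case: embedding => [[[_ tr] _] _ _ _ _]. Qed.

Lemma tens_rel_trip : tens_rel trip tens.
Proof. by case: embedding => [[_ rel] _ _ _ _]. Qed.

Lemma lin_br0r u : lin_map (br0 u).
Proof. by case: embedding => [_ _ _ [[_ br] _] _]. Qed.

Lemma br0_tens x y u v :
  br0 (tens x y) (tens u v) = tens (trip x y u) v - tens (trip x y v) u.
Proof. by case: embedding => [_ _ _ [_ ->] _]. Qed.

Lemma lin_actl v : lin_map (act^~ v).
Proof. by case: embedding => [_ _ _ _ [[al _] _]] a x x'; apply: al. Qed.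

Lemma lin_actr t : lin_map (act t).
Proof. by case: embedding => [_ _ _ _ [[_ ar] _]]. Qed.

Lemma act_tens t x y : act t (tens x y) = trip t x y - trip t y x.
Proof. by case: embedding => [_ _ _ _ [_ ->]]. Qed.

Lemma lin_map_tens_ext (V : lmodType K) (F G : L0 -> V) : lin_map F -> lin_map G ->
  (forall x y, F (tens x y) = G (tens x y)) -> forall v, F v = G v.
Proof.
move=> linF linG FG v; case: embedding => [_ tens_span _ _ _].
apply: (kspan_min (Q := fun v => F v = G v)) (tens_span v) => [|_ [x [y ->]]] //.
split=> [|v1 v2 e1 e2|a v1 e1].
- by rewrite (lin_map0 linF) (lin_map0 linG).
- by rewrite (lin_mapD linF) (lin_mapD linG) e1 e2.
- by rewrite (lin_mapZ linF) (lin_mapZ linG) e1.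
Qed.

(* The universal property of [L^0] applied to [x (x) y |-> {x, y, z}], which
   satisfies the defining relations by the first Leibniz identity. *)
Lemma trip_factor z :
  exists2 g : L0 -> T, lin_map g & forall x y, g (tens x y) = trip x y z.
Proof.
case: embedding => [_ _ univ _ _].
have [|a b c d|g [lin_g gE]] := univ T (fun x y => trip x y z); last by exists g.
- split=> a x x' y; [exact: (trilinear_lin1 trilin_trip) | exact: (trilinear_lin2 trilin_trip)].
- exact: leibniz_mid.
Qed.

Lemma br0_tensl x y v : br0 (tens x y) v = tens (act x v) y + tens x (act y v).
Proof.
apply: (@lin_map_tens_ext _ _ (fun v => tens (act x v) y + tens x (act y v)) (lin_br0r _))
  => [a v1 v2 | u w] /=.
  rewrite (lin_actr x) (lin_actr y) (lin_tensl y) (lin_tensr x).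
  by rewrite scalerDr addrACA.
rewrite br0_tens !act_tens (lin_mapB (lin_tensl y)) (lin_mapB (lin_tensr x)) !tens_rel_trip.
exact: subr_rearrange1.
Qed.

Lemma act_trip x y z g : lin_map g -> (forall p q, g (tens p q) = trip p q z) ->
  forall v, act (trip x y z) v = trip x y (act z v) + g (br0 (tens x y) v).
Proof.
move=> lin_g gE.
apply: (@lin_map_tens_ext _ _ (fun v => trip x y (act z v) + g (br0 (tens x y) v)) (lin_actr _))
  => [a v1 v2 | u w] /=.
  rewrite (lin_actr z) (trilinear_lin3 trilin_trip x y) (lin_br0r (tens x y)) lin_g.
  by rewrite scalerDr addrACA.
rewrite !act_tens br0_tens (lin_mapB lin_g) !gE (lin_mapB (trilinear_lin3 trilin_trip x y)).
by rewrite !leibniz_right; apply: subr_rearrange2.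
Qed.

Lemma trip_tens0 x y z : tens x y = 0 -> trip x y z = 0.
Proof. by move=> xy0; have [g lin_g <-] := trip_factor z; rewrite xy0 (lin_map0 lin_g). Qed.

Lemma trip_swap_tens0 x y z : tens y z = 0 -> trip x y z = trip x z y.
Proof. by move=> yz0; apply/eqP; rewrite -subr_eq0 -act_tens yz0 (lin_map0 (lin_actr x)). Qed.

(** * Weights and connected roots *)

Local Notation W := (wt H0).
Local Notation Tsp := (Tsp act H0).
Local Notation Lsp := (Lsp br0 H0).
Local Notation Lam1 := (Lam1 act H0).
Local Notation Lam0 := (Lam0 br0 H0).
Local Notation Lam1z := (Lam1z act H0).
Local Notation connected := (connected br0 act H0).
Implicit Types (al be ce H mu nu u v w : W) (x y z p q r : T).

(* Weights carry the pointwise group structure of [{h | H0 h} -> K]; the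
   operations of the definitions are that structure, up to conversion. *)
Lemma waddE (a b : W) : wadd a b = a + b. Proof. by []. Qed.
Lemma w0E : w0 H0 = 0. Proof. by []. Qed.

Lemma subspace_Tsp (a : W) : subspace (Tsp a).
Proof.
split=> [h|x y ax ay h|c x ax h].
- by rewrite (lin_map0 (lin_actl _)) scaler0.
- by rewrite (lin_mapD (lin_actl _)) ax ay scalerDr.
- by rewrite (lin_mapZ (lin_actl _)) ax !scalerA mulrC.
Qed.

Lemma Lsp_tens (a b : W) x y : Tsp a x -> Tsp b y -> Lsp (a + b) (tens x y).
Proof.
move=> ax by_ h; rewrite br0_tensl ax by_ (lin_mapZ (lin_tensl y)) (lin_mapZ (lin_tensr x)).
by rewrite -scalerDl.
Qed.

Lemma Tsp_trip (a b c : W) x y z : Tsp a x -> Tsp b y -> Tsp c z -> Tsp (a + b + c) (trip x y z).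
Proof.
move=> ax by_ cz h; have [g lin_g gE] := trip_factor z.
rewrite (act_trip x y lin_g gE) cz (Lsp_tens ax by_) (lin_mapZ lin_g) gE.
by rewrite (lin_mapZ (trilinear_lin3 trilin_trip x y)) -scalerDl addrC.
Qed.

Lemma Lam1z_Tsp (a : W) x : Tsp a x -> x <> 0 -> Lam1z a.
Proof. by move=> ax x0; have [->|a0] := lem (a = 0); [right | left; split=> //; exists x]. Qed.

Lemma Lam1_Tsp (a : W) x : Tsp a x -> x <> 0 -> a <> 0 -> Lam1 a.
Proof. by move=> ax x0 a0; split=> //; exists x. Qed.

Definition Lam0z w := w = 0 \/ Lam0 w.

Lemma Lam0z_tens (a b : W) x y : Tsp a x -> Tsp b y -> tens x y <> 0 -> Lam0z (a + b).
Proof.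
move=> ax by_ xy0; have [|ab0] := lem (a + b = 0); [by left | right].
by split=> //; exists (tens x y); split=> //; apply: Lsp_tens.
Qed.

Hypothesis Lam1_sym : symmetric_set H0 Lam1.
Hypothesis Lam0_sym : symmetric_set H0 Lam0.

Lemma Lam1N (a : W) : Lam1 a -> Lam1 (- a). Proof. exact: Lam1_sym. Qed.
Lemma Lam0N (a : W) : Lam0 a -> Lam0 (- a). Proof. exact: Lam0_sym. Qed.

Lemma Lam1zN (a : W) : Lam1z a -> Lam1z (- a).
Proof. by case=> [/Lam1N|->]; [left | right; rewrite w0E oppr0]. Qed.

Lemma Lam1_neq0 (a : W) : Lam1 a -> a <> 0. Proof. by case. Qed.

(* A chain from [al] to [be] lists the partial sums [s k] of a connecting family. *)
Definition chain (al be : W) := exists n (s : nat -> W), [/\ s 1%N = al,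
  (forall i, (2 <= i <= n.*2.+1)%N -> Lam1z (s i - s i.-1)),
  (forall k, (k <= n)%N -> Lam1 (s k.*2.+1)),
  (forall k, (1 <= k <= n)%N -> Lam0 (s k.*2)) &
  s n.*2.+1 = be \/ s n.*2.+1 = - be].

Lemma psumS (a : nat -> W) k : psum a k.+1 = psum a k + a k.+1. Proof. by []. Qed.

Lemma connectedE al be : connected al be <-> [/\ Lam1 al, Lam1 be & chain al be].
Proof.
split=> [[al1 be1 [n [a [a1 az odd1 even0 end_be]]]]
        | [al1 be1 [n [s [s1 sz odd1 even0 end_be]]]]].
  split=> //; exists n, (psum a); split=> //; first by rewrite psumS a1 add0r.
  by case=> [|[|i]] i_n //; rewrite psumS addrAC subrr add0r; apply: az; lia.
split=> //; pose a i := if i == 1%N then al else s i - s i.-1.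
have psum_s i : psum a i.+1 = s i.+1.
  by elim: i => [|i IH]; rewrite psumS ?add0r ?IH /a //= addrC subrK.
exists n, a; split=> //.
- by case=> [|[|i]] i_n //; [left | apply: sz; lia].
- by move=> k k_n; rewrite psum_s; apply: odd1.
- by case=> [|k] k_n //; rewrite doubleS psum_s; apply: (even0 k.+1).
- by rewrite psum_s.
Qed.

Lemma chain_oppl al be : chain al be -> chain (- al) be.
Proof.
case=> n [s [s1 sz odd1 even0 end_be]]; exists n, (fun k => - s k); split=> [|i i_n|k k_n|k k_n|].
- by rewrite s1.
- by rewrite -opprD; apply/Lam1zN/sz.
- exact/Lam1N/odd1.
- exact/Lam0N/even0.
- by case: end_be => ->; [right | left; rewrite opprK].
Qed.

Lemma chain_rev al be : chain al be -> chain be al.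
Proof.
case=> n [s [s1 sz odd1 even0 end_be]].
suff: chain (s n.*2.+1) al by case: end_be => -> // /chain_oppl; rewrite opprK.
exists n, (fun k => s (n.*2.+2 - k)%N); split=> [|i i_n|k k_n|k k_n|].
- by rewrite subSS subn0.
- have -> : (n.*2.+2 - i.-1 = n.*2.+3 - i)%N by lia.
  have -> : (n.*2.+2 - i = (n.*2.+3 - i).-1)%N by lia.
  by rewrite -opprB; apply: Lam1zN; apply: sz; lia.
- by rewrite (_ : (n.*2.+2 - k.*2.+1 = (n - k).*2.+1)%N); [apply: odd1; lia | lia].
- by rewrite (_ : (n.*2.+2 - k.*2 = (n - k).+1.*2)%N); [apply: even0; lia | lia].
- by rewrite (_ : (n.*2.+2 - n.*2.+1 = 1)%N) ?s1; [left | lia].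
Qed.

Lemma chain_trans al be ce : chain al be -> chain be ce -> chain al ce.
Proof.
case=> n [s [s1 sz odd1 even0 end_be]] chain_be.
have [m [t [t1 tz odd1' even0' end_ce]]] : chain (s n.*2.+1) ce.
  by case: end_be => ->; last apply: chain_oppl.
pose u k := if (k <= n.*2.+1)%N then s k else t (k - n.*2)%N.
have uT k : (n.*2.+1 <= k)%N -> u k = t (k - n.*2)%N.
  move=> k_ge; rewrite /u; case: leqP => // k_le; have -> : k = n.*2.+1 by lia.
  by rewrite subSn // subnn t1.
exists (n + m)%N, u; split=> [|i i_nm|k k_nm|k k_nm|].
- by rewrite /u /= s1.
- have [i_n|n_i] := leqP i n.*2.+1.
    by rewrite /u i_n (leq_trans (leq_pred _) i_n); apply: sz; lia.
  rewrite !uT; try lia; rewrite (_ : (i.-1 - n.*2 = (i - n.*2).-1)%N); last by lia.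
  by apply: tz; lia.
- have [k_n|n_k] := leqP k n.
    by rewrite /u (_ : (k.*2.+1 <= n.*2.+1)%N); [apply: odd1 | lia].
  rewrite uT; last by lia.
  by rewrite (_ : (k.*2.+1 - n.*2 = (k - n).*2.+1)%N); [apply: odd1'; lia | lia].
- have [k_n|n_k] := leqP k n.
    by rewrite /u (_ : (k.*2 <= n.*2.+1)%N); [apply: even0; lia | lia].
  rewrite uT; last by lia.
  by rewrite (_ : (k.*2 - n.*2 = (k - n).*2)%N); [apply: even0'; lia | lia].
- rewrite uT; last by lia.
  by have -> : ((n + m).*2.+1 - n.*2 = m.*2.+1)%N by lia.
Qed.

Lemma connected_sym al be : connected al be -> connected be al.
Proof. by case/connectedE=> al1 be1 /chain_rev; rewrite connectedE. Qed.

Lemma connected_trans al be ce : connected al be -> connected be ce -> connected al ce.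
Proof.
move=> /connectedE [al1 _ ch1] /connectedE [_ ce1 ch2].
by apply/connectedE; split=> //; apply: chain_trans ch2.
Qed.

Lemma connected_Lam1 al be : connected al be -> Lam1 be.
Proof. by case. Qed.

Lemma connected_opp al : Lam1 al -> connected al (- al).
Proof.
move=> al1; apply/connectedE; split=> //; first exact: Lam1N.
exists 0%N, (fun=> al); split=> [|i|k _|k|] //; try lia.
by right; rewrite opprK.
Qed.

Lemma connected_refl al : Lam1 al -> connected al al.
Proof.
by move=> al1; apply: connected_trans (connected_opp al1) (connected_sym (connected_opp al1)).
Qed.

Lemma connected_step u v w : Lam1 u -> Lam1z v -> Lam1z w -> Lam0 (u + v) ->
  Lam1 (u + v + w) -> connected u (u + v + w).
Proof.
move=> u1 v1 w1 uv0 uvw1; apply/connectedE; split=> //.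
exists 1%N, (fun i => if i is 1%N then u else if i is 2%N then u + v else u + v + w).
split=> [|[|[|[|[|i]]]] i_n|[|[|k]] k_n|[|[|k]] k_n|] //=; try lia.
- by rewrite addrAC subrr add0r.
- by rewrite addrAC subrr add0r.
- by left.
Qed.

Lemma connected_pair u v : Lam1 u -> Lam1 v -> Lam0z (u + v) -> connected u v.
Proof.
move=> u1 v1 [uv0|uv0].
  have -> : v = - u by apply: (addrI u); rewrite uv0 subrr.
  exact: connected_opp.
have -> : v = u + v - u by rewrite addrAC subrr add0r.
apply: connected_step => //; [by left | left; exact: Lam1N |].
by rewrite addrAC subrr add0r.
Qed.

Definition class0 (al w : W) := w = 0 \/ connected al w.

Lemma class0_trans al be w : connected al be -> class0 be w -> class0 al w.
Proof. by move=> al_be [->|be_w]; [left | right; apply: connected_trans be_w]. Qed.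

Lemma connected_Lam0 (u r : W) : Lam1 u -> Lam1 r -> Lam0 u -> Lam0 r ->
  Lam1z (u + r) -> connected u r.
Proof.
move=> u1 r1 u0 r0 [ur1|ur0]; last exact: connected_pair (or_introl ur0).
have step (x y : W) : Lam1 x -> Lam1 y -> Lam0 x -> Lam1 (x + y) -> connected x (x + y).
  move=> x1 y1 x0 xy1; have := @connected_step x 0 y x1 (or_intror erefl) (or_introl y1).
  by rewrite !addr0 => /(_ x0 xy1).
apply: connected_trans (step u r u1 r1 u0 ur1) _.
by apply/connected_sym; rewrite addrC; apply: step; rewrite // addrC.
Qed.

Lemma class0_anchor (u v r : W) : Lam1 u -> Lam1z v -> Lam1z r -> Lam0 (u + v) ->
  Lam0z (u + r) \/ Lam0z (v + r) -> Lam1z (u + v + r) ->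
  [/\ class0 u v, class0 u r & class0 u (u + v + r)].
Proof.
move=> u1 v1 r1 uv0 ur_vr uvr1; split.
- by case: v1 uv0 => [v1 uv0|->]; [right; apply: connected_pair; last right | left].
- case: r1 => [r1|->]; last by left.
  right; case: ur_vr => [ur|vr]; first exact: connected_pair.
  case: v1 uv0 vr uvr1 => [v1 uv0 vr _|-> uv0 vr uvr1].
    exact: connected_trans (connected_pair u1 v1 (or_intror uv0)) (connected_pair v1 r1 vr).
  rewrite w0E addr0 in uv0 uvr1; rewrite w0E add0r in vr.
  by apply: connected_Lam0 => //; case: vr => // r0; case: r1 => /(_ r0).
- by case: uvr1 => [uvr1|->]; [right; apply: connected_step | left].
Qed.

(** * Weights of nonzero products *)

Hypothesis splitting : split_LTS trip act H0.

Lemma trip_T0 x y z : Tsp 0 x -> Tsp 0 y -> Tsp 0 z -> trip x y z = 0.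
Proof. by case: splitting => _ _ T0_cube _; apply: T0_cube. Qed.

Lemma trip_opp_T0 (a : W) x y z : Lam1 a -> Tsp a x -> Tsp (- a) y -> Tsp 0 z -> trip x y z = 0.
Proof. by case: splitting => _ _ _ opp0 a1; apply: (opp0 a a1). Qed.

Lemma Lam1zP (a : W) : Lam1z a -> a <> 0 -> Lam1 a. Proof. by case. Qed.

Lemma Lam0_neq0 (a : W) : Lam0 a -> a <> 0. Proof. by case. Qed.

Lemma class0_opp_anchor (a c : W) : Lam1 a -> Lam1z c -> Lam0z (a + c) \/ Lam0z (- a + c) ->
  class0 a c.
Proof.
move=> a1 [c1|->] ac; [right | by left].
case: ac => [ac|[ac0|ac0]]; first exact: connected_pair.
  have -> : c = a by apply: (addrI (- a)); rewrite ac0 addNr.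
  exact: connected_refl.
exact: connected_trans (connected_opp a1) (connected_pair (Lam1N a1) c1 (or_intror ac0)).
Qed.

Lemma trip_neq0_weights p q r (a b c : W) : Tsp a p -> Tsp b q -> Tsp c r -> trip p q r <> 0 ->
  [/\ [/\ Lam1z a, Lam1z b, Lam1z c & Lam1z (a + b + c)], Lam0z (a + b)
    & Lam0z (a + c) \/ Lam0z (b + c)].
Proof.
move=> ap bq cr pqr0.
have [p0 q0 r0] : [/\ p <> 0, q <> 0 & r <> 0].
  by split=> e; apply: pqr0; rewrite e ?trip0l ?trip0m ?trip0r.
split.
- split; [exact: Lam1z_Tsp ap p0 | exact: Lam1z_Tsp bq q0 | exact: Lam1z_Tsp cr r0 |].
  exact: Lam1z_Tsp (Tsp_trip ap bq cr) pqr0.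
- by apply: Lam0z_tens ap bq _ => pq0; apply/pqr0/trip_tens0.
- have [pr0|pr0] := lem (tens p r = 0); last by left; apply: Lam0z_tens ap cr pr0.
  right; apply: Lam0z_tens bq cr _ => qr0; apply: pqr0.
  by rewrite (trip_swap_tens0 p qr0); apply: trip_tens0.
Qed.

Lemma trip_weights_class0 p q r (a b c : W) : Tsp a p -> Tsp b q -> Tsp c r -> trip p q r <> 0 ->
  exists2 H, Lam1 H & [/\ class0 H a, class0 H b, class0 H c & class0 H (a + b + c)].
Proof.
move=> ap bq cr pqr0.
have [[a1 b1 c1 abc1] ab0 ac_bc] := trip_neq0_weights ap bq cr pqr0.
case: ab0 => [ab0|ab0].
  have eb : b = - a by apply: (addrI a); rewrite ab0 subrr.
  rewrite eb subrr add0r; rewrite eb in ac_bc bq.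
  have [a0|a0] := lem (a = 0); last first.
    have a1' := Lam1zP a1 a0; exists a => //.
    split; [right; exact: connected_refl | right; exact: connected_opp |
            exact: class0_opp_anchor a1' c1 ac_bc ..].
  have c1' : Lam1 c.
    apply: (Lam1zP c1) => c0; apply: pqr0.
    by move: ap bq cr; rewrite a0 oppr0 c0; apply: trip_T0.
  by exists c => //; rewrite a0 oppr0; split; [left | left | right; exact: connected_refl ..].
have [a0|a0] := lem (a = 0); last first.
  have [cl_b cl_c cl_s] := class0_anchor (Lam1zP a1 a0) b1 c1 ab0 ac_bc abc1.
  by exists a; [exact: Lam1zP a1 a0 | split=> //; right; apply/connected_refl/Lam1zP].
have b1' : Lam1 b by apply: (Lam1zP b1) => b0; apply: (Lam0_neq0 ab0); rewrite a0 b0 addr0.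
have ba0 : Lam0 (b + a) by rewrite addrC.
have bc_ac : Lam0z (b + c) \/ Lam0z (a + c) by case: ac_bc; [right | left].
have bac1 : Lam1z (b + a + c) by rewrite (addrC b).
have [cl_a cl_c cl_s] := class0_anchor b1' a1 c1 ba0 bc_ac bac1.
by exists b => //; split=> //; [right; exact: connected_refl | rewrite (addrC a)].
Qed.

Lemma class0_connected al w : class0 al w -> w <> 0 -> connected al w.
Proof. by case. Qed.

Lemma class0_spread al p q r (a b c : W) w : Tsp a p -> Tsp b q -> Tsp c r -> trip p q r <> 0 ->
  (w = a \/ w = b \/ w = c \/ w = a + b + c) -> w <> 0 -> class0 al w ->
  [/\ class0 al a, class0 al b, class0 al c & class0 al (a + b + c)].
Proof.
move=> ap bq cr pqr0 w_abc w0 /class0_connected /(_ w0) al_w.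
have [H _ [Ha Hb Hc Habc]] := trip_weights_class0 ap bq cr pqr0.
have H_w : connected H w.
  by apply: class0_connected w0; case: w_abc => [|[|[|]]] ->.
have al_H := connected_trans al_w (connected_sym H_w).
by split; apply: class0_trans al_H _.
Qed.

Lemma T0_weight_sum x y z mu nu : Tsp 0 x -> Tsp mu y -> Tsp nu z -> trip y z x <> 0 ->
  mu + nu <> 0.
Proof.
move=> x0 ymu znu P0 munu0.
have enu : nu = - mu by apply: (addrI mu); rewrite munu0 subrr.
rewrite enu in znu; have [mu0|mu0] := lem (mu = 0).
  by apply: P0; move: ymu znu; rewrite mu0 oppr0 => ymu znu; apply: trip_T0.
have y0 : y <> 0 by move=> y0; apply: P0; rewrite y0 trip0l.
exact/P0/(trip_opp_T0 (Lam1zP (Lam1z_Tsp ymu y0) mu0) ymu znu x0).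
Qed.

Definition class0_pair al mu nu := [/\ class0 al mu, class0 al nu & class0 al (mu + nu)].

(* Two of mu, nu and mu + nu cannot vanish without the third. *)
Lemma class0_pair_of_two al mu nu :
  (forall w, w = mu \/ w = nu \/ w = mu + nu -> w <> 0 -> class0 al w -> class0_pair al mu nu) ->
  [\/ class0 al mu /\ class0 al nu, class0 al mu /\ class0 al (mu + nu)
    | class0 al nu /\ class0 al (mu + nu)] -> class0_pair al mu nu.
Proof.
move=> spread [[m n]|[m s]|[n s]].
- have [mu0|mu0] := lem (mu = 0); last by apply: (spread mu) => //; left.
  have [nu0|nu0] := lem (nu = 0); last by apply: (spread nu) => //; right; left.
  by split=> //; left; rewrite mu0 nu0 addr0.
- have [mu0|mu0] := lem (mu = 0); last by apply: (spread mu) => //; left.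
  have [s0|s0] := lem (mu + nu = 0); last by apply: (spread (mu + nu)) => //; right; right.
  by split=> //; left; rewrite -s0 mu0 add0r.
- have [nu0|nu0] := lem (nu = 0); last by apply: (spread nu) => //; right; left.
  have [s0|s0] := lem (mu + nu = 0); last by apply: (spread (mu + nu)) => //; right; right.
  by split=> //; left; rewrite -s0 nu0 addr0.
Qed.

Lemma T0_spread al x y z mu nu : Tsp 0 x -> Tsp mu y -> Tsp nu z ->
  trip x y z <> 0 \/ trip y x z <> 0 \/ trip y z x <> 0 ->
  forall w, w = mu \/ w = nu \/ w = mu + nu -> w <> 0 -> class0 al w -> class0_pair al mu nu.
Proof.
move=> x0 ymu znu P0 w w_in w0 cl_w; case: P0 => [P0|[P0|P0]].
- have w_in' : w = 0 \/ w = mu \/ w = nu \/ w = 0 + mu + nu by rewrite add0r; right.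
  have [_ m n s] := class0_spread x0 ymu znu P0 w_in' w0 cl_w.
  by split=> //; rewrite -[mu]add0r.
- have w_in' : w = mu \/ w = 0 \/ w = nu \/ w = mu + 0 + nu by rewrite addr0; tauto.
  have [m _ n s] := class0_spread ymu x0 znu P0 w_in' w0 cl_w.
  by split=> //; rewrite -[mu]addr0.
- have w_in' : w = mu \/ w = nu \/ w = 0 \/ w = mu + nu + 0 by rewrite addr0; tauto.
  have [m n _ s] := class0_spread ymu znu x0 P0 w_in' w0 cl_w.
  by split=> //; rewrite -[mu + nu]addr0.
Qed.

Definition T0_generator al x := exists (b1 b2 b3 : W) (a b c : T),
  [/\ Tsp b1 a, Tsp b2 b, Tsp b3 c,
  [/\ class0 al b1, class0 al b2 & class0 al b3] & b1 + b2 + b3 = 0 /\ x = trip a b c].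

Lemma T0_generator_Tsp al x : T0_generator al x -> Tsp 0 x.
Proof. by case=> b1 [b2 [b3 [a [b [c [b1a b2b b3c _ [<- ->]]]]]]]; apply: Tsp_trip. Qed.

Lemma T0_generator_root al (b1 b2 b3 : W) (a b c : T) : Tsp b1 a -> Tsp b2 b -> Tsp b3 c ->
  class0 al b1 -> b1 + b2 + b3 = 0 -> trip a b c <> 0 -> b3 <> 0.
Proof.
move=> b1a b2b b3c cl1 sum0 abc0 b30; apply: abc0.
have eb2 : b2 = - b1 by apply: (addrI b1); rewrite -[b1 + b2]addr0 -b30 sum0 subrr.
rewrite eb2 in b2b; rewrite b30 in b3c.
case: cl1 => [b10|/connected_Lam1 b11]; last exact: trip_opp_T0 b11 b1a b2b b3c.
by move: b1a b2b; rewrite b10 oppr0 => b1a b2b; apply: trip_T0.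
Qed.

Lemma T0_generator_l al x y z mu nu : T0_generator al x -> Tsp mu y -> Tsp nu z ->
  trip x y z <> 0 -> class0_pair al mu nu.
Proof.
case=> b1 [b2 [b3 [a [b [c [b1a b2b b3c [cl1 cl2 cl3] [sum0 ->]]]]]]] ymu znu P0.
have x0 : Tsp 0 (trip a b c) by rewrite -sum0; apply: Tsp_trip.
have b30 : b3 <> 0.
  by apply: T0_generator_root b1a b2b b3c cl1 sum0 _ => abc0; apply: P0; rewrite abc0 trip0l.
have tot (u v : W) : b1 + b2 + u + b3 + v = u + v by rewrite (addrAC _ u) sum0 add0r.
apply: class0_pair_of_two; first exact: T0_spread x0 ymu znu (or_introl P0).
case: (summand4_neq0 (leibniz_right a b c y z) P0) => [P1|[P2|[P3|P4]]].
- have cyz0 : trip c y z <> 0 by move=> e; apply: P1; rewrite e trip0r.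
  have [_ m n _] := class0_spread b3c ymu znu cyz0 (or_introl erefl) b30 cl3.
  by apply: Or31.
- have [_ _ n] := class0_spread (Tsp_trip b1a b2b ymu) b3c znu P2
    (or_intror (or_introl erefl)) b30 cl3.
  by rewrite tot => s; apply: Or33.
- have [_ _ m] := class0_spread (Tsp_trip b1a b2b znu) b3c ymu P3
    (or_intror (or_introl erefl)) b30 cl3.
  by rewrite tot addrC => s; apply: Or32.
- have [_ m _] := class0_spread (Tsp_trip b1a b2b znu) ymu b3c P4
   
    (or_intror (or_intror (or_introl erefl))) b30 cl3.
  by rewrite addrAC tot addrC => s; apply: Or32.
Qed.

Lemma T0_generator_m al x y z mu nu : T0_generator al x -> Tsp mu y -> Tsp nu z ->
  trip y x z <> 0 -> class0_pair al mu nu.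
Proof.
case=> b1 [b2 [b3 [a [b [c [b1a b2b b3c [cl1 cl2 cl3] [sum0 ->]]]]]]] ymu znu P0.
have x0 : Tsp 0 (trip a b c) by rewrite -sum0; apply: Tsp_trip.
have b30 : b3 <> 0.
  by apply: T0_generator_root b1a b2b b3c cl1 sum0 _ => abc0; apply: P0; rewrite abc0 trip0m.
have spread := T0_spread (al := al) x0 ymu znu (or_intror (or_introl P0)).
have two := class0_pair_of_two spread.
have tot (u v : W) : u + b1 + b2 + b3 + v = u + v by rewrite -(addrA u) -(addrA u) sum0 addr0.
(* The two middle terms of the expansion differ by exchanging (a, b1) and (b, b2). *)
have mid (a' b' : T) (b1' b2' : W) : Tsp b1' a' -> Tsp b2' b' -> class0 al b1' ->
    class0 al b2' -> b1' + b2' + b3 = 0 -> trip (trip y c a') b' z <> 0 -> class0_pair al mu nu.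
  move=> b1a' b2b' cl1' cl2' sum0' P3.
  have yca0 : trip y c a' <> 0 by move=> e; apply: P3; rewrite e trip0l.
  have [m _ _ _] := class0_spread ymu b3c b1a' yca0
    (or_intror (or_introl erefl)) b30 cl3.
  have [mu0|mu0] := lem (mu = 0); last by apply: (spread mu) => //; left.
  suff n : class0 al nu by apply: two; apply: Or31.
  have [b20|b20] := lem (b2' = 0).
    have gen : T0_generator al (trip y c a').
      exists mu, b3, b1', y, c, a'; split=> //; split=> //.
      by rewrite mu0 add0r addrC -sum0' b20 addr0.
    by have [] := T0_generator_l gen b2b' znu P3.
  by have [] := class0_spread (Tsp_trip ymu b3c b1a') b2b' znu P3
    (or_intror (or_introl erefl)) b20 cl2'.
case: (sum4_neq0 (leibniz_mid y a b c z) P0) => [P1|[P2|[P3|P4]]].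
- have [_ _ n] := class0_spread (Tsp_trip ymu b1a b2b) b3c znu P1
    (or_intror (or_introl erefl)) b30 cl3.
  by rewrite tot => s; apply: two; apply: Or33.
- have [_ _ n] := class0_spread (Tsp_trip ymu b2b b1a) b3c znu P2
    (or_intror (or_introl erefl)) b30 cl3.
  by rewrite (addrAC mu b2) tot => s; apply: two; apply: Or33.
- exact: mid b1a b2b cl1 cl2 sum0 P3.
- by apply: mid b2b b1a cl2 cl1 _ P4; rewrite (addrC b2).
Qed.

Lemma T0_generator_r al x y z mu nu : T0_generator al x -> Tsp mu y -> Tsp nu z ->
  trip y z x <> 0 -> class0_pair al mu nu.
Proof.
case=> b1 [b2 [b3 [a [b [c [b1a b2b b3c [cl1 cl2 cl3] [sum0 ->]]]]]]] ymu znu P0.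
have x0 : Tsp 0 (trip a b c) by rewrite -sum0; apply: Tsp_trip.
have b30 : b3 <> 0.
  by apply: T0_generator_root b1a b2b b3c cl1 sum0 _ => abc0; apply: P0; rewrite abc0 trip0r.
have spread := T0_spread (al := al) x0 ymu znu (or_intror (or_intror P0)).
have two := class0_pair_of_two spread.
have munu0 := T0_weight_sum x0 ymu znu P0.
have spread_sum (a' b' : T) (b1' b2' : W) : Tsp b1' a' -> Tsp b2' b' -> b1' + b2' + b3 = 0 ->
    trip (trip y z a') b' c <> 0 -> class0_pair al mu nu.
  move=> b1a' b2b' sum0' P1; apply: (spread (mu + nu)) => //; first by right; right.
  have [_ _ _] := class0_spread (Tsp_trip ymu znu b1a') b2b' b3c P1
   
    (or_intror (or_intror (or_introl erefl))) b30 cl3.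
  by rewrite -!addrA (addrA b1') sum0' addr0.
case: (sum4_neq0 (leibniz_right y z a b c) P0) => [P1|[P2|[P3|P4]]].
- exact: spread_sum b1a b2b sum0 P1.
- by apply: spread_sum b2b b1a _ P2; rewrite (addrC b2).
- have yzc0 : trip y z c <> 0 by move=> e; apply: P3; rewrite e trip0l.
  have [m n _ _] := class0_spread ymu znu b3c yzc0
    (or_intror (or_intror (or_introl erefl))) b30 cl3.
  by apply: two; apply: Or31.
- have yzc0 : trip y z c <> 0 by move=> e; apply: P4; rewrite e trip0l.
  have [m n _ _] := class0_spread ymu znu b3c yzc0
    (or_intror (or_intror (or_introl erefl))) b30 cl3.
  by apply: two; apply: Or31.
Qed.

(** * The ideals I_[al] *)

Local Notation I_cls := (I_cls trip br0 act H0).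
Local Notation T0_Lam := (T0_Lam trip br0 act H0).
Local Notation V_Lam := (V_Lam br0 act H0).
Local Notation Lam1_of := (Lam1_of br0 act H0).
Local Notation sum_of_classes := (kspan (fun x => exists al, Lam1 al /\ I_cls al x)).

Lemma class0E al w : class0 al w <-> Lam1_of al w \/ w = w0 H0.
Proof.
split=> [[->|al_w]|[[_ al_w]|->]]; [by right | | by right | by left].
by left; split=> //; exact: connected_Lam1 al_w.
Qed.

Definition class_vector al x wx := [/\ Tsp wx x, class0 al wx &
  forall y z mu nu, Tsp mu y -> Tsp nu z ->
    trip x y z <> 0 \/ trip y x z <> 0 \/ trip y z x <> 0 ->
    [/\ class0 al mu, class0 al nu & class0 al (wx + mu + nu)]].

Lemma class_vector_root al g x : connected al g -> Tsp g x -> class_vector al x g.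
Proof.
move=> al_g gx; have g0 := Lam1_neq0 (connected_Lam1 al_g).
split=> [||y z mu nu ymu znu [P0|[P0|P0]]] //; first by right.
- by have [] := class0_spread gx ymu znu P0 (or_introl erefl) g0 (or_intror al_g).
- have [m _ n] := class0_spread ymu gx znu P0 (or_intror (or_introl erefl)) g0 (or_intror al_g).
  by rewrite (addrC mu).
- have [m n _] := class0_spread ymu znu gx P0
    (or_intror (or_intror (or_introl erefl))) g0 (or_intror al_g).
  by rewrite addrC addrA.
Qed.

Lemma class_vector_T0 al x : T0_generator al x -> class_vector al x 0.
Proof.
move=> gen; split; [exact: T0_generator_Tsp gen | by left |].
move=> y z mu nu ymu znu [P0|[P0|P0]]; rewrite add0r.
- by have [] := T0_generator_l gen ymu znu P0.
- by have [] := T0_generator_m gen ymu znu P0.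
- by have [] := T0_generator_r gen ymu znu P0.
Qed.

Lemma I_cls_spanned al : spanned_by (I_cls al) (fun x => exists wx, class_vector al x wx).
Proof.
move=> Q Qsub Qcv x [t0 [v [t0_in v_in ->]]]; case: (Qsub) => _ QD _; apply: QD.
  apply: kspan_min Qsub _ t0 t0_in
    => t [b1 [b2 [b3 [a [b [c [[c1 [c2 c3]] sum0 [b1a [b2b b3c]] ->]]]]]]].
  apply: Qcv; exists 0; apply: class_vector_T0.
  by exists b1, b2, b3, a, b, c; split=> //; split; apply/class0E.
apply: kspan_min Qsub _ v v_in => t [g [[_ al_g] gx]].
by apply: Qcv; exists g; apply: class_vector_root.
Qed.

Lemma split_spanned : spanned_by (fun=> True) (fun t => exists w, Tsp w t).
Proof.
move=> Q Qsub Qw t _; case: splitting => [decomp _ _ _]; have [s [s_w ->]] := decomp t.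
by apply: subspace_sum => // p /s_w [_ p_w]; apply: Qw; exists p.1.
Qed.

Lemma I_cls_subspace al : subspace (I_cls al).
Proof. exact: subspace_add (subspace_kspan _) (subspace_kspan _). Qed.

Lemma I_cls_trip al p q r (a b c : W) : Tsp a p -> Tsp b q -> Tsp c r ->
  class0 al a -> class0 al b -> class0 al c -> class0 al (a + b + c) -> I_cls al (trip p q r).
Proof.
move=> ap bq cr cla clb clc [s0|al_s].
  exists (trip p q r), 0; split; [|exact: kspan0 | by rewrite addr0].
  by apply: kspan_gen; exists a, b, c, p, q, r; split=> //; split; [|split]; apply/class0E.
exists 0, (trip p q r); split; [exact: kspan0 | | by rewrite add0r].
apply: kspan_gen; exists (a + b + c); split; last exact: Tsp_trip.
by split=> //; exact: connected_Lam1 al_s.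
Qed.

Lemma class_vector_trip al x wx y z mu nu : class_vector al x wx -> Tsp mu y -> Tsp nu z ->
  [/\ I_cls al (trip x y z), I_cls al (trip y x z) & I_cls al (trip y z x)].
Proof.
move=> [xw clx spread] ymu znu.
have in_I p q r (a b c : W) : Tsp a p -> Tsp b q -> Tsp c r ->
    (trip p q r <> 0 -> [/\ class0 al a, class0 al b & class0 al c /\ class0 al (a + b + c)]) ->
    I_cls al (trip p q r).
  move=> ap bq cr cl; have [->|P0] := lem (trip p q r = 0); first by case: (I_cls_subspace al).
  by have [cla clb [clc cls]] := cl P0; exact: I_cls_trip ap bq cr cla clb clc cls.
split.
- apply: (in_I _ _ _ _ _ _ xw ymu znu) => P0.
  by have [] := spread y z mu nu ymu znu (or_introl P0).
- apply: (in_I _ _ _ _ _ _ ymu xw znu) => P0.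
  have [m n s] := spread y z mu nu ymu znu (or_intror (or_introl P0)).
  by split=> //; split=> //; rewrite (addrC mu); exact: s.
- apply: (in_I _ _ _ _ _ _ ymu znu xw) => P0.
  have [m n s] := spread y z mu nu ymu znu (or_intror (or_intror P0)).
  by split=> //; split=> //; rewrite addrC addrA; exact: s.
Qed.

Lemma I_cls_ideal al : ideal trip (I_cls al).
Proof.
split=> [|x y z x_in]; first exact: I_cls_subspace.
have span f : trilinear f -> (forall x y z, (exists wx, class_vector al x wx) ->
    (exists mu, Tsp mu y) -> (exists nu, Tsp nu z) -> I_cls al (f x y z)) -> I_cls al (f x y z).
  move=> trilin_f fI.
  by apply: (trilinear_spanned trilin_f (I_cls_spanned (al := al)) split_spanned split_spanned
    (I_cls_subspace al) fI x_in).
split.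
- apply: span trilin_trip _ => x' y' z' [wx cv] [mu ymu] [nu znu].
  by case: (class_vector_trip cv ymu znu).
- apply: (span (fun x y z => trip y x z)) (trilinear_swap12 trilin_trip) _
    => x' y' z' [wx cv] [mu ymu] [nu znu].
  by case: (class_vector_trip cv ymu znu).
- apply: (span (fun x y z => trip y z x)) (trilinear_rot trilin_trip) _
    => x' y' z' [wx cv] [mu ymu] [nu znu].
  by case: (class_vector_trip cv ymu znu).
Qed.

Lemma class0_disjoint al be w : ~ connected al be -> class0 al w -> class0 be w -> w = 0.
Proof.
move=> al_be [//|al_w] [//|be_w].
by case: al_be; apply: connected_trans al_w (connected_sym be_w).
Qed.

Lemma class_vector_orth al be x wx z wz y mu : ~ connected al be ->
  class_vector al x wx -> class_vector be z wz -> Tsp mu y ->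
  [/\ trip x y z = 0, trip x z y = 0 & trip y x z = 0].
Proof.
move=> al_be [xw clx spx] [zw clz spz] ymu.
have zero := class0_disjoint al_be.
have T0 p q r (a b c : W) : Tsp a p -> Tsp b q -> Tsp c r -> a = 0 -> b = 0 -> c = 0 ->
    trip p q r = 0.
  by move=> ap bq cr a0 b0 c0; move: ap bq cr; rewrite a0 b0 c0; apply: trip_T0.
split; apply: contrapT => P0.
- have [mu_al wz_al _] := spx y z mu wz ymu zw (or_introl P0).
  have [wx_be mu_be _] := spz x y wx mu xw ymu (or_intror (or_intror P0)).
  by case: P0; apply: (T0 _ _ _ _ _ _ xw ymu zw); apply: zero.
- have [wz_al mu_al _] := spx z y wz mu zw ymu (or_introl P0).
  have [wx_be mu_be _] := spz x y wx mu xw ymu (or_intror (or_introl P0)).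
  by case: P0; apply: (T0 _ _ _ _ _ _ xw zw ymu); apply: zero.
- have [mu_al wz_al _] := spx y z mu wz ymu zw (or_intror (or_introl P0)).
  have [mu_be wx_be _] := spz y x mu wx ymu xw (or_intror (or_intror P0)).
  by case: P0; apply: (T0 _ _ _ _ _ _ ymu xw zw); apply: zero.
Qed.

Lemma I_cls_orth al be : ~ connected al be -> forall x y z, I_cls al x -> I_cls be z ->
  [/\ trip x y z = 0, trip x z y = 0 & trip y x z = 0].
Proof.
move=> al_be x y z x_in z_in.
have span f : trilinear f -> (forall x y z, (exists wx, class_vector al x wx) ->
    (exists mu, Tsp mu y) -> (exists wz, class_vector be z wz) -> f x y z = 0) -> f x y z = 0.
  move=> trilin_f f0.
  by apply: (trilinear_spanned trilin_f (I_cls_spanned (al := al)) split_spanned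
    (I_cls_spanned (al := be)) (subspace0 T) f0 x_in).
split.
- apply: span trilin_trip _ => x' y' z' [wx cvx] [mu ymu] [wz cvz].
  by case: (class_vector_orth al_be cvx cvz ymu).
- apply: (span (fun x y z => trip x z y)) (trilinear_swap23 trilin_trip) _
    => x' y' z' [wx cvx] [mu ymu] [wz cvz].
  by case: (class_vector_orth al_be cvx cvz ymu).
- apply: (span (fun x y z => trip y x z)) (trilinear_swap12 trilin_trip) _
    => x' y' z' [wx cvx] [mu ymu] [wz cvz].
  by case: (class_vector_orth al_be cvx cvz ymu).
Qed.

Lemma Lam1_of_connected al be : connected al be -> Lam1_of al = Lam1_of be.
Proof.
move=> al_be; apply/funext => g; apply/propext.
split=> -[g1 x_g]; split=> //; first exact: connected_trans (connected_sym al_be) x_g.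
exact: connected_trans al_be x_g.
Qed.

Lemma I_cls_connected al be : connected al be -> I_cls al = I_cls be.
Proof.
by move=> al_be; rewrite /Defs.I_cls /Defs.T0_Lam /Defs.V_Lam (Lam1_of_connected al_be).
Qed.

Lemma T0_Lam_Tsp al t : T0_Lam al t -> Tsp 0 t.
Proof.
apply: kspan_min (subspace_Tsp 0) _ t => t [b1 [b2 [b3 [a [b [c [_ sum0 [b1a [b2b b3c]] ->]]]]]]].
by move: sum0; rewrite !waddE w0E => <-; apply: Tsp_trip.
Qed.

Definition root_vectors (s : seq (W * T)) := forall p : W * T, Lin p s -> Lam1 p.1 /\ Tsp p.1 p.2.

Lemma V_Lam_weights al t : V_Lam al t ->
  exists s : seq (W * T), root_vectors s /\ t = \sum_(p <- s) p.2.
Proof.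
move=> [s [s_in ->]]; elim: s s_in => [|p s IH] s_in; first by exists [::]; rewrite !big_nil.
have [s' [s'_w e]] := IH (fun (q : K * T) sq => s_in q (or_intror sq)).
have [g [[g1 _] gp]] := s_in p (or_introl erefl).
exists ((g, p.1 *: p.2) :: s'); rewrite !big_cons e; split=> // q [<-|/s'_w //].
by split=> //; case: (subspace_Tsp g) => _ _; apply.
Qed.

Lemma group_by_weight (s : seq (W * T)) : root_vectors s ->
  exists2 s' : seq (W * T), uniq (map fst s') /\ root_vectors s'
    & \sum_(p <- s') p.2 = \sum_(p <- s) p.2.
Proof.
move=> s_w; set ws := undup (map fst s).
exists [seq (w, \sum_(p <- s | p.1 == w) p.2) | w <- ws]; first split.
- by rewrite -map_comp map_id_in ?undup_uniq.
- move=> _ /(@Lin_map _ _ _ _ ws) [w /LinP w_ws ->] /=; split.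
    by move: w_ws; rewrite mem_undup => /mapP [p /LinP /s_w [p1 _] ->].
  rewrite -big_filter; apply: subspace_sum (subspace_Tsp w) _ => p /LinP.
  by rewrite mem_filter => /andP [/eqP <- /LinP /s_w []].
- rewrite big_map; under eq_bigr do rewrite big_mkcond.
  rewrite exchange_big; apply: eq_big_seq => p p_s /=.
  rewrite (bigD1_seq p.1) ?undup_uniq ?mem_undup ?map_f //= eqxx big1 ?addr0 // => w.
  by rewrite eq_sym => /negPf ->.
Qed.

Lemma T0_Lam_V_Lam_direct al t : T0_Lam al t -> V_Lam al t -> t = 0.
Proof.
move=> t_T0 /V_Lam_weights [s [s_w et]].
have [s' [s'_uniq s'_w] s's] := group_by_weight s_w.
have uniq_w : uniq (map fst ((0, - t) :: s')).
  rewrite /= s'_uniq andbT; apply/mapP => -[p /LinP /s'_w [p1 _] p0].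
  exact: Lam1_neq0 p1 (esym p0).
case: splitting => [_ direct _ _].
suff: - t = 0 by move/eqP; rewrite oppr_eq0 => /eqP.
apply: (direct ((0, - t) :: s')) (or_introl erefl) => [q [<-|/s'_w [q1 q_w]]|i j i_s j_s ij e|].
- split; first by right.
  by rewrite -scaleN1r; case: (subspace_Tsp 0) => _ _; apply; exact: T0_Lam_Tsp t_T0.
- by split; first left.
- apply: ij; apply/eqP; rewrite -(nth_uniq (w0 H0) _ _ uniq_w) ?size_map //.
  by rewrite !(nth_map (w0 H0, 0)) // e.
- by rewrite big_cons s's -et addNr.
Qed.

Lemma zero_span_classes t : zero_span trip act H0 Lam1 t -> sum_of_classes t.
Proof.
apply: kspan_min (subspace_kspan _) _ t => t [b1 [b2 [b3 [a [b [c [_ _ [b1a [b2b b3c]] ->]]]]]]].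
have [->|abc0] := lem (trip a b c = 0); first exact: kspan0.
have [H H1 [cl1 cl2 cl3 cls]] := trip_weights_class0 b1a b2b b3c abc0.
by apply: kspan_gen; exists H; split=> //; exact: I_cls_trip b1a b2b b3c cl1 cl2 cl3 cls.
Qed.

Lemma root_vector_classes w t : Tsp w t -> w <> 0 -> sum_of_classes t.
Proof.
move=> tw w0; have [->|t0] := lem (t = 0); first exact: kspan0.
have w1 := Lam1_Tsp tw t0 w0; apply: kspan_gen; exists w; split=> //.
exists 0, t; rewrite add0r; split=> //; first exact: kspan0.
by apply: kspan_gen; exists w; split=> //; split=> //; exact: connected_refl.
Qed.

Lemma decomposition (U : T -> Prop) : subspace U ->
  (forall t, Tsp 0 t -> exists u s : T, [/\ U u, zero_span trip act H0 Lam1 s & t = u + s]) ->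
  forall t, exists u v : T, [/\ U u, sum_of_classes v & t = u + v].
Proof.
move=> U_sub U_compl t; apply: split_spanned (subspace_add U_sub (subspace_kspan _)) _ t I.
move=> {}t [w tw]; have [w0|w0] := lem (w = 0).
  rewrite w0 in tw; have [u [s [Uu s_in ->]]] := U_compl t tw.
  by exists u, s; split=> //; exact: zero_span_classes.
by exists 0, t; rewrite add0r; split=> //; [case: U_sub | exact: root_vector_classes tw w0].
Qed.

End SplitLTS.

Theorem theorem3p2 (K : fieldType) (T : lmodType K) (trip : T -> T -> T -> T)
    (L0 : lmodType K) (tens : T -> T -> L0) (br0 : L0 -> L0 -> L0)
    (act : T -> L0 -> T) (H0 : L0 -> Prop) (U : T -> Prop) :
  leibniz_triple trip ->
  standard_embedding trip tens br0 act ->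
  max_abelian br0 H0 ->
  split_LTS trip act H0 ->
  symmetric_set H0 (Lam1 act H0) ->
  symmetric_set H0 (Lam0 br0 H0) ->
  subspace U ->
  (forall u, U u -> Tsp act H0 (w0 H0) u) ->
  (forall t, U t -> zero_span trip act H0 (Lam1 act H0) t -> t = 0) ->
  (forall t, Tsp act H0 (w0 H0) t ->
     exists u s, [/\ U u, zero_span trip act H0 (Lam1 act H0) s & t = u + s]) ->
  [/\ (forall t, exists u w, [/\ U u,
          kspan (fun x => exists al, Lam1 act H0 al /\ I_cls trip br0 act H0 al x) w
        & t = u + w]),
      (forall al, Lam1 act H0 al ->
          ideal trip (I_cls trip br0 act H0 al) /\
          (forall t, T0_Lam trip br0 act H0 al t -> V_Lam br0 act H0 al t -> t = 0)),
      (forall al be, connected br0 act H0 al be ->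
          forall t, I_cls trip br0 act H0 al t <-> I_cls trip br0 act H0 be t) &
      (forall al be, Lam1 act H0 al -> Lam1 act H0 be -> ~ connected br0 act H0 al be ->
          forall x y z, I_cls trip br0 act H0 al x -> I_cls trip br0 act H0 be z ->
            [/\ trip x y z = 0, trip x z y = 0 & trip y x z = 0])].
Proof.
move=> LTS embedding _ splitting Lam1_sym Lam0_sym U_sub _ _ U_compl.
split=> [|al _|al be al_be t|al be _ _ al_be].
- exact: (decomposition LTS embedding Lam1_sym Lam0_sym splitting U_sub U_compl).
- split; first exact: (I_cls_ideal LTS embedding Lam1_sym Lam0_sym splitting al).
  by move=> t; apply: (T0_Lam_V_Lam_direct LTS embedding splitting).
- by rewrite (I_cls_connected trip Lam1_sym Lam0_sym al_be).
- by move=> x y z; apply: (I_cls_orth LTS embedding Lam1_sym Lam0_sym splitting al_be).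
Qed.
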